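(* Let $(T,\eta,\mu)$ be a monad on $\mathsf{Set}$ and $(A,e)$ a $T$-algebra. Consider the partial evaluation relation $R=\{(\mu_A(\tau),(Te)(\tau)) : \tau\in TTA\}\subseteq TA\times TA$. Then $R$ is an internal relation on the free $T$-algebra $(TA,\mu_A)$, i.e. a $T$-subalgebra of the product algebra $TA\times TA$. Moreover, $R$ is the smallest internal relation on $(TA,\mu_A)$ which contains all pairs $(t,\eta_A(e(t)))$ for $t\in TA$ (i.e. which relates every formal expression to its total result).
   Context: For a $T$-algebra $B$, an internal relation on $B$ is a subset $R\subseteq B\times B$ that is a $T$-subalgebra of $B\times B$, where $B\times B$ carries the componentwise (product) $T$-algebra structure. A formal expression $t_0\in TA$ partially evaluates to $t_1\in TA$ if there is $\tau\in TTA$ with $\mu_A(\tau)=t_0$ and $(Te)(\tau)=t_1$. *)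

Set Implicit Arguments.

Record monad := Monad {
  T : Type -> Type;
  fmap : forall (A B : Type), (A -> B) -> T A -> T B;
  eta : forall (A : Type), A -> T A;
  mu : forall (A : Type), T (T A) -> T A;
  fmap_id : forall A (x : T A), fmap (fun a => a) x = x;
  fmap_comp : forall A B C (f : A -> B) (g : B -> C) (x : T A),
      fmap (fun a => g (f a)) x = fmap g (fmap f x);
  eta_nat : forall A B (f : A -> B) (a : A), fmap f (eta a) = eta (f a);
  mu_nat : forall A B (f : A -> B) (x : T (T A)),
      fmap f (mu x) = mu (fmap (fmap f) x);
  mu_eta_l : forall A (x : T A), mu (eta x) = x;
  mu_eta_r : forall A (x : T A), mu (fmap (@eta A) x) = x;
  mu_assoc : forall A (x : T (T (T A))), mu (mu x) = mu (fmap (@mu A) x)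
}.

Arguments fmap {m A B} _ _.
Arguments eta {m A} _.
Arguments mu {m A} _.

Definition is_algebra (M : monad) (A : Type) (e : T M A -> A) : Prop :=
  (forall a : A, e (eta a) = a) /\
  (forall x : T M (T M A), e (mu x) = e (fmap e x)).

Definition prod_alg (M : monad) (B : Type) (b : T M B -> B)
  (t : T M (B * B)) : B * B :=
  (b (fmap fst t), b (fmap snd t)).

(* An internal relation on the T-algebra (B,b): a subset R of B x B that is
   a T-subalgebra of B x B, i.e. closed under the product structure map
   applied to formal expressions T R (included into T (B x B)). *)
Definition internal_relation (M : monad) (B : Type) (b : T M B -> B)
  (R : B -> B -> Prop) : Prop :=
  forall s : T M {p : B * B | R (fst p) (snd p)},
    let q := @prod_alg M B b (fmap (@proj1_sig _ _) s) in R (fst q) (snd q).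

Definition partial_eval (M : monad) (A : Type) (e : T M A -> A)
  (t0 t1 : T M A) : Prop :=
  exists tau : T M (T M A), mu tau = t0 /\ fmap e tau = t1.

(* Partial evaluation is the image of the parallel pair of T-algebra
   morphisms [mu, fmap e : (TTA, mu) -> (TA, mu)], and the image of any
   parallel pair of algebra morphisms is an internal relation: a formal
   expression of related pairs lifts, by choice, to one of witnesses, which
   the domain algebra then evaluates.  Conversely, an internal relation
   containing every [(t, eta (e t))] relates
   [mu (fmap id tau) = mu tau] to [mu (fmap (eta \o e) tau) = fmap e tau]. *)

From Stdlib Require Import ClassicalEpsilon FunctionalExtensionality.

Section InternalRelations.

Variable M : monad.

Definition algebra_morphism {C B : Type} (c : T M C -> C) (b : T M B -> B)
  (f : C -> B) : Prop :=
  forall x : T M C, f (c x) = b (fmap f x).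

Lemma internal_relation_image {C B : Type} {c : T M C -> C} {b : T M B -> B}
    (f g : C -> B) :
  algebra_morphism c b f -> algebra_morphism c b g ->
  @internal_relation M B b (fun x y => exists z : C, f z = x /\ g z = y).
Proof.
  intros Hf Hg s.
  set (R := fun p : B * B => exists z : C, f z = fst p /\ g z = snd p).
  assert (lift : forall p : {p : B * B | R p},
             {z : C | f z = fst (proj1_sig p) /\ g z = snd (proj1_sig p)}).
  { intros p. apply constructive_indefinite_description, (proj2_sig p). }
  exists (c (fmap (fun p => proj1_sig (lift p)) s)).
  unfold prod_alg; cbn; rewrite Hf, Hg, <- !fmap_comp.
  split; do 2 f_equal; apply functional_extensionality; intros p;
    apply (proj2_sig (lift p)).
Qed.

Lemma internal_relation_fmap {B C : Type} {b : T M B -> B}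
    {S : B -> B -> Prop} (f g : C -> B) (t : T M C) :
  @internal_relation M B b S -> (forall z : C, S (f z) (g z)) ->
  S (b (fmap f t)) (b (fmap g t)).
Proof.
  intros HS Hfg.
  pose proof (HS (fmap (fun z => exist (fun p => S (fst p) (snd p))
                                       (f z, g z) (Hfg z)) t)) as H.
  unfold prod_alg in H; cbn in H; rewrite <- !fmap_comp in H.
  exact H.
Qed.

Variables (A : Type) (e : T M A -> A).

Lemma algebra_morphism_mu : algebra_morphism (@mu M (T M A)) (@mu M A) mu.
Proof. intros x; apply mu_assoc. Qed.

Lemma algebra_morphism_fmap : algebra_morphism (@mu M (T M A)) (@mu M A) (fmap e).
Proof. intros x; apply mu_nat. Qed.

Lemma internal_relation_partial_eval :
  @internal_relation M (T M A) (@mu M A) (@partial_eval M A e).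
Proof.
  exact (internal_relation_image _ _ algebra_morphism_mu algebra_morphism_fmap).
Qed.

Lemma partial_eval_total (t : T M A) : @partial_eval M A e t (eta (e t)).
Proof. exists (eta t); split; [apply mu_eta_l | apply eta_nat]. Qed.

Lemma partial_eval_minimal (S : T M A -> T M A -> Prop) :
  @internal_relation M (T M A) (@mu M A) S -> (forall t : T M A, S t (eta (e t))) ->
  forall t0 t1, @partial_eval M A e t0 t1 -> S t0 t1.
Proof.
  intros HS Htotal t0 t1 [tau [<- <-]].
  pose proof (internal_relation_fmap (fun t : T M A => t)
                (fun t : T M A => eta (e t)) tau HS Htotal) as H.
  rewrite fmap_id, fmap_comp, mu_eta_r in H.
  exact H.
Qed.

End InternalRelations.

Theorem proposition3p3 (M : monad) (A : Type) (e : T M A -> A) :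
  @is_algebra M A e ->
  @internal_relation M (T M A) (@mu M A) (@partial_eval M A e) /\
  (forall t : T M A, @partial_eval M A e t (eta (e t))) /\
  (forall S : T M A -> T M A -> Prop,
      @internal_relation M (T M A) (@mu M A) S ->
      (forall t : T M A, S t (eta (e t))) ->
      forall t0 t1, @partial_eval M A e t0 t1 -> S t0 t1).
Proof.
  intros _.
  split; [|split].
  - apply internal_relation_partial_eval.
  - apply partial_eval_total.
  - apply partial_eval_minimal.
Qed.
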